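(* Let $(a_n)_{n\ge1}$ be a sequence in $(0,\infty)$ such that (i) $\liminf_{N\to\infty}(a_1\cdots a_N)^{1/N}\ge 1$, and (ii) $\limsup_{N\to\infty}\frac1N\sum_{n=1}^N a_n^2\le 1$. Then, as $N\to\infty$, \[ \frac1N\sum_{n=1}^N a_n\to 1,\qquad \frac1N\sum_{n=1}^N a_n^2\to1,\qquad \frac1N\sum_{n=1}^N (a_n-1)^2\to 0 . \] *)

From Stdlib Require Import Reals.
From Coquelicot Require Import Coquelicot.
Open Scope R_scope.

Fixpoint prod1 (a : nat -> R) (N : nat) : R :=
  match N with
  | O => 1
  | S k => prod1 a k * a (S k)
  end.

Fixpoint sum1 (a : nat -> R) (N : nat) : R :=
  match N with
  | O => 0
  | S k => sum1 a k + a (S k)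
  end.

(* (a_1 ... a_N)^(1/N) ; value at N = 0 irrelevant for limits *)
Definition geom_mean (a : nat -> R) (N : nat) : R :=
  Rpower (prod1 a N) (/ INR N).

Definition avg (a : nat -> R) (N : nat) : R := sum1 a N / INR N.

(* AM-GM gives (a_1 ... a_N)^(1/N) <= (1/N) sum a_n, so hypothesis (i) makes
   the mean of a_n at least 1 - eps eventually.  Expanding the square,
   (1/N) sum (a_n - 1)^2 = (1/N) sum a_n^2 - 2 (1/N) sum a_n + 1 >= 0, and with
   hypothesis (ii) this pinches all three averages to their limits. *)
From Stdlib Require Import Reals Lra Lia.
From Coquelicot Require Import Coquelicot.
Open Scope R_scope.

Lemma LimSup_seq_le_lt_eventually (u : nat -> R) (l : R) :
  Rbar_le (LimSup_seq u) l ->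
  forall eps : posreal, exists N, forall n, (N <= n)%nat -> u n < l + eps.
Proof.
  unfold LimSup_seq; destruct (ex_LimSup_seq u) as [[r| |] Hu]; simpl;
    intros Hle eps.
  - destruct (Hu eps) as [_ [N HN]].
    exists N; intros n Hn; specialize (HN n Hn); simpl in Hle; lra.
  - contradiction.
  - apply Hu.
Qed.

Lemma LimInf_seq_ge_gt_eventually (u : nat -> R) (l : R) :
  Rbar_le l (LimInf_seq u) ->
  forall eps : posreal, exists N, forall n, (N <= n)%nat -> l - eps < u n.
Proof.
  unfold LimInf_seq; destruct (ex_LimInf_seq u) as [[r| |] Hu]; simpl;
    intros Hle eps.
  - destruct (Hu eps) as [_ [N HN]].
    exists N; intros n Hn; specialize (HN n Hn); simpl in Hle; lra.
  - apply Hu.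
  - contradiction.
Qed.

Lemma sum1_nonneg (f : nat -> R) (n : nat) :
  (forall k, (1 <= k)%nat -> 0 <= f k) -> 0 <= sum1 f n.
Proof.
  intros Hf; induction n as [|n IH]; simpl; [lra|].
  specialize (Hf (S n) ltac:(lia)); lra.
Qed.

Lemma sum1_pos (f : nat -> R) (n : nat) :
  (forall k, (1 <= k)%nat -> 0 < f k) -> (1 <= n)%nat -> 0 < sum1 f n.
Proof.
  intros Hf Hn; destruct n as [|m]; [lia|]; simpl.
  assert (0 <= sum1 f m) by (apply sum1_nonneg; intros k Hk; left; auto).
  specialize (Hf (S m) ltac:(lia)); lra.
Qed.

Lemma prod1_pos (f : nat -> R) (n : nat) :
  (forall k, (1 <= k)%nat -> 0 < f k) -> 0 < prod1 f n.
Proof.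
  intros Hf; induction n as [|n IH]; simpl; [lra|].
  apply Rmult_lt_0_compat; [exact IH | apply Hf; lia].
Qed.

Lemma avg_nonneg (f : nat -> R) (n : nat) :
  (forall k, (1 <= k)%nat -> 0 <= f k) -> (1 <= n)%nat -> 0 <= avg f n.
Proof.
  intros Hf Hn; apply Rdiv_le_0_compat; [now apply sum1_nonneg |].
  apply lt_0_INR; lia.
Qed.

Lemma sum1_sq_sub (f : nat -> R) (c : R) (n : nat) :
  sum1 (fun k => (f k - c) ^ 2) n
  = sum1 (fun k => f k ^ 2) n - 2 * c * sum1 f n + INR n * c ^ 2.
Proof.
  induction n as [|n IH]; [simpl; ring|].
  change (sum1 (fun k => (f k - c) ^ 2) (S n))
    with (sum1 (fun k => (f k - c) ^ 2) n + (f (S n) - c) ^ 2).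
  rewrite IH, S_INR; simpl; ring.
Qed.

Lemma avg_sq_sub1 (f : nat -> R) (n : nat) : (1 <= n)%nat ->
  avg (fun k => (f k - 1) ^ 2) n = avg (fun k => f k ^ 2) n - 2 * avg f n + 1.
Proof.
  intros Hn; assert (0 < INR n) by (apply lt_0_INR; lia).
  unfold avg; rewrite sum1_sq_sub; field; lra.
Qed.

(* The tangent line bound ln t <= t - 1 at t = x / c. *)
Lemma ln_le_div_sub1 (x c : R) : 0 < x -> 0 < c -> ln x <= x / c - 1 + ln c.
Proof.
  intros Hx Hc.
  assert (Hxc : 0 < x / c) by (apply Rdiv_lt_0_compat; assumption).
  pose proof (exp_ineq1_le (ln (x / c))) as Htangent.
  rewrite exp_ln in Htangent by exact Hxc.
  rewrite ln_div in Htangent by assumption; lra.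
Qed.

Lemma ln_prod1_le (f : nat -> R) (c : R) (n : nat) :
  (forall k, (1 <= k)%nat -> 0 < f k) -> 0 < c ->
  ln (prod1 f n) <= sum1 f n / c - INR n + INR n * ln c.
Proof.
  intros Hf Hc; induction n as [|n IH]; simpl prod1; simpl sum1.
  - rewrite ln_1; simpl; unfold Rdiv; lra.
  - rewrite ln_mult by (apply prod1_pos || apply Hf; auto with arith).
    pose proof (ln_le_div_sub1 (f (S n)) c (Hf (S n) ltac:(lia)) Hc).
    rewrite S_INR; unfold Rdiv in *; lra.
Qed.

Lemma geom_mean_le_avg (f : nat -> R) (n : nat) :
  (forall k, (1 <= k)%nat -> 0 < f k) -> (1 <= n)%nat -> geom_mean f n <= avg f n.
Proof.
  intros Hf Hn; unfold geom_mean, Rpower.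
  assert (HN : 0 < INR n) by (apply lt_0_INR; lia).
  assert (Hsum : 0 < sum1 f n) by now apply sum1_pos.
  set (A := avg f n).
  assert (HA : 0 < A) by (apply Rdiv_lt_0_compat; assumption).
  assert (Hln : / INR n * ln (prod1 f n) <= ln A).
  { pose proof (ln_prod1_le f A n Hf HA) as Hprod.
    replace (sum1 f n / A) with (INR n) in Hprod by (unfold A, avg; field; lra).
    apply Rmult_le_reg_l with (INR n); [exact HN|].
    rewrite <- Rmult_assoc, Rinv_r, Rmult_1_l by lra; lra. }
  rewrite <- (exp_ln A) by exact HA.
  destruct Hln as [Hlt | Heq]; [left; now apply exp_increasing | now rewrite Heq; right].
Qed.

Lemma LimInf_avg_ge1 (a : nat -> R) :
  (forall n, (1 <= n)%nat -> 0 < a n) ->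
  Rbar_le (Finite 1) (LimInf_seq (geom_mean a)) ->
  Rbar_le (Finite 1) (LimInf_seq (avg a)).
Proof.
  intros hpos h1; apply Rbar_le_trans with (1 := h1), LimInf_le.
  exists 1%nat; intros n Hn; now apply geom_mean_le_avg.
Qed.

Theorem lemma2p1 (a : nat -> R)
  (hpos : forall n, (1 <= n)%nat -> 0 < a n)
  (h1 : Rbar_le (Finite 1) (LimInf_seq (geom_mean a)))
  (h2 : Rbar_le (LimSup_seq (avg (fun n => a n ^ 2))) (Finite 1)) :
  is_lim_seq (avg a) 1 /\
  is_lim_seq (avg (fun n => a n ^ 2)) 1 /\
  is_lim_seq (avg (fun n => (a n - 1) ^ 2)) 0.
Proof.
  assert (Hclose : forall eps : posreal, exists N, forall n, (N <= n)%nat ->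
     Rabs (avg a n - 1) < eps /\ Rabs (avg (fun n => a n ^ 2) n - 1) < eps /\
     Rabs (avg (fun n => (a n - 1) ^ 2) n - 0) < eps).
  { intros [eps Heps].
    assert (Hthird : 0 < eps / 3) by lra.
    destruct (LimInf_seq_ge_gt_eventually _ _ (LimInf_avg_ge1 a hpos h1)
                (mkposreal _ Hthird)) as [N1 HN1].
    destruct (LimSup_seq_le_lt_eventually _ _ h2 (mkposreal _ Hthird)) as [N2 HN2].
    exists (S (N1 + N2)); intros n Hn.
    specialize (HN1 n ltac:(lia)); specialize (HN2 n ltac:(lia)); cbn [pos] in HN1, HN2.
    pose proof (avg_sq_sub1 a n ltac:(lia)) as Hexpand.
    pose proof (avg_nonneg (fun k => (a k - 1) ^ 2) n
                  (fun k _ => pow2_ge_0 (a k - 1)) ltac:(lia)) as Hvar.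
    repeat split; apply Rabs_def1; cbn [pos]; lra. }
  split; [|split]; apply is_lim_seq_spec; intros eps;
    destruct (Hclose eps) as [N HN]; exists N; intros n Hn; apply HN, Hn.
Qed.
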